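(* Let $X$ be an Alexandroff space, $Y$ a topological space, and $f:X\to Y$ a map. Then $f$ has closed graph if and only if for every connected component $C$ of $X$, $f(C)$ is a singleton $\{y\}$ with $y$ a closed point of $Y$.
   Context: For a map $f:X\to Y$ its graph is $G_f=\{(x,f(x)):x\in X\}$; $f$ has closed graph if $G_f$ is closed in $X\times Y$ (product topology). A point $y\in Y$ is closed if $\{y\}$ is a closed set. A topological space $X$ is an Alexandroff space if the intersection of every nonempty family of open subsets of $X$ is open; equivalently, every point $a\in X$ has a smallest open neighbourhood, denoted $V_a$. *)

From HB Require Import structures.
From mathcomp Require Import all_boot all_order all_algebra.
From mathcomp Require Import all_classical all_reals all_analysis.
Set Implicit Arguments. Unset Strict Implicit. Unset Printing Implicit Defensive.
Local Open Scope classical_set_scope.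

Definition alexandroff (X : topologicalType) : Prop :=
  forall S : set (set X), S !=set0 -> (forall A, S A -> open A) ->
    open (\bigcap_(A in S) A).

Definition graph (X Y : Type) (f : X -> Y) : set (X * Y) :=
  [set p | p.2 = f p.1].

Definition closed_graph (X Y : topologicalType) (f : X -> Y) : Prop :=
  closed (graph f).

(* In an Alexandroff space every point [a] has a smallest open neighbourhood
   [V a].  A closed graph forces [f] to be constant on each [V a] (the graph
   point [(a, f b)] is adherent through [(b, f b)] for [b] in [V a]) and to take
   closed values; a function constant on the sets [V a] has clopen level sets,
   hence is constant on components.  Conversely [a] lies in the closure of [{b}]
   for [b] in [V a], so [a] and [b] share a component and [f b = f a]; the
   product neighbourhood [V a * W] then shows that any limit [(a, z)] of the
   graph has [z] in the closure of the closed point [f a]. *)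
From HB Require Import structures.
From mathcomp Require Import all_boot all_order all_algebra.
From mathcomp Require Import all_classical all_reals all_analysis.
Local Open Scope classical_set_scope.

Section MinimalNeighbourhood.
Context {X : topologicalType}.

Definition min_nbhs (a : X) : set X :=
  \bigcap_(A in [set A : set X | open A /\ A a]) A.

Lemma min_nbhs_refl a : min_nbhs a a.
Proof. by move=> A []. Qed.

Lemma min_nbhs_sub a B : nbhs a B -> min_nbhs a `<=` B.
Proof. by rewrite nbhsE => -[U [oU Ua] UB] b Vb; apply: UB; exact: Vb. Qed.

Lemma min_nbhs_closure a b : min_nbhs a b -> closure [set b] a.
Proof. by move=> Vb B aB; exists b; split=> //; exact: min_nbhs_sub aB _ Vb. Qed.

Lemma min_nbhs_component a b :
  min_nbhs a b -> connected_component [set: X] b a.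
Proof.
move=> Vb; apply: (@connected_component_max _ _ (closure [set b])) => //.
- exact/subset_closure.
- exact/connected_closure/connected1.
- exact: min_nbhs_closure.
Qed.

Hypothesis alX : alexandroff X.

Lemma open_min_nbhs a : open (min_nbhs a).
Proof. by apply: alX => [|A []//]; exists setT; split=> //; exact: openT. Qed.

Lemma nbhs_min_nbhs a : nbhs a (min_nbhs a).
Proof. exact/open_nbhs_nbhs/(conj (open_min_nbhs a) (min_nbhs_refl a)). Qed.

Lemma open_min_nbhs_stable (A : set X) :
  (forall a b, A a -> min_nbhs a b -> A b) -> open A.
Proof.
move=> AV; rewrite openE => a Aa.
by apply: filterS (nbhs_min_nbhs a) => b; exact: AV.
Qed.

Lemma min_nbhs_const_component (T : Type) (f : X -> T) x :
  (forall a b, min_nbhs a b -> f b = f a) ->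
  connected_component [set: X] x `<=` [set b | f b = f x].
Proof.
move=> fV; set A := [set b | f b = f x].
have oA : open A.
  by apply: open_min_nbhs_stable => a b + Vb; rewrite /A /= (fV a b Vb).
have oAC : open (~` A).
  by apply: open_min_nbhs_stable => a b + Vb; rewrite /A /= (fV a b Vb).
have [] := @connected_subset X A (~` A) (connected_component [set: X] x).
- by apply/clopen_separatedP; split=> //; rewrite -[A]setCK; exact: open_closedC.
- by rewrite setUv.
- exact: component_connected.
- done.
- by move=> /(_ x (connected_component_refl _)) [].
Qed.

End MinimalNeighbourhood.

Section ClosedGraph.
Context {X Y : topologicalType} (f : X -> Y).
Hypothesis cgf : closed_graph f.

Lemma closed_graph_min_nbhs a b : min_nbhs a b -> f b = f a.
Proof.
move=> Vb; apply: (cgf (a, f b)) => B [[P1 P2] /= [aP1 fbP2] PB].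
exists (b, f b); split=> //; apply: PB; split=> /=.
- exact: min_nbhs_sub aP1 _ Vb.
- exact: nbhs_singleton.
Qed.

Lemma closed_graph_closed_point x : closed [set f x].
Proof.
move=> z zcl; apply: (cgf (x, z)) => B [[P1 P2] /= [xP1 zP2] PB].
have [_ [-> fxP2]] := zcl _ zP2.
by exists (x, f x); split=> //; apply: PB; split=> //; exact: nbhs_singleton.
Qed.

End ClosedGraph.

Lemma min_nbhs_closed_graph (X Y : topologicalType) (f : X -> Y) :
  alexandroff X -> (forall a b, min_nbhs a b -> f b = f a) ->
  (forall x, closed [set f x]) -> closed_graph f.
Proof.
move=> alX fV fcl [a z] cl; apply: (fcl a) => W zW.
have [[b w] [/= wfb [Vb Ww]]] : graph f `&` (min_nbhs a `*` W) !=set0.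
  by apply: cl; exists (min_nbhs a, W) => //; split=> //; exact: nbhs_min_nbhs.
by exists (f a); split=> //; rewrite -(fV a b Vb) -wfb.
Qed.

Theorem lemma3p4 (X Y : topologicalType) (f : X -> Y) :
  alexandroff X ->
  (closed_graph f <->
   forall x : X, exists y : Y,
     f @` (connected_component [set: X] x) = [set y] /\ closed [set y]).
Proof.
move=> alX; split=> [cgf x | fC].
  exists (f x); split; last exact: closed_graph_closed_point cgf x.
  have fCx := @min_nbhs_const_component _ alX _ f x (closed_graph_min_nbhs _ cgf).
  apply/seteqP; split=> [_ [b /fCx fb <-] // | _ ->].
  by exists x => //; exact: connected_component_refl.
have fCx x b : connected_component [set: X] x b -> f b = f x.
  have [y [fCy _]] := fC x.
  have fy c : connected_component [set: X] x c -> f c = y.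
    by move=> xc; have : [set y] (f c) by rewrite -fCy; exists c.
  by move=> xb; rewrite !fy //; exact: connected_component_refl.
apply: min_nbhs_closed_graph => // [a b /min_nbhs_component/connected_component_sym|x].
  exact: fCx.
have [y [fCy cy]] := fC x.
suff -> : f x = y by [].
by have : [set y] (f x) by rewrite -fCy; exists x => //; exact: connected_component_refl.
Qed.
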